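(* Let $h>0$, $\mathbb{T}:=\{0,h,2h,\ldots\}$, $n\in\mathbb{N}$, and $p_0,\ldots,p_{n-1}\in\mathbb{C}\setminus\{-\tfrac1h\}$; define $p:\mathbb{T}\to\mathbb{C}$ by $p(t)=p_k$ if $\tfrac th\equiv k\pmod n$, where $p$ is periodic with period $n$ and not periodic with any smaller period. Let $E:=\prod_{i=0}^{n-1}|1+hp_i|$ and assume $0<E\ne1$. For $k\in\{0,\ldots,n-1\}$ let $S_k:=\sum_{j=1}^{n}\left(\prod_{i=0}^{j-1}|1+hp_{(k+i)\bmod n}|\right)^{-1}$. Then the equation $\Delta_hx(t)-p(t)x(t)=0$, $t\in\mathbb{T}$, with $\Delta_hx(t):=\frac{x(t+h)-x(t)}{h}$, has Ulam stability on $\mathbb{T}$ with Ulam stability constant $$K_0:=\frac{hE}{|1-E|}\max\{S_0,S_1,\ldots,S_{n-1}\}.$$ Moreover, if $E>1$, then $K_0$ is the minimum Ulam stability constant for this equation.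
   Context: A constant $K>0$ is an Ulam stability constant for the equation on $\mathbb{T}$ if for every $\varepsilon>0$ and every $\phi:\mathbb{T}\to\mathbb{C}$ with $|\Delta_h\phi(t)-p(t)\phi(t)|\le\varepsilon$ for all $t\in\mathbb{T}$, there is a solution $x$ with $|\phi(t)-x(t)|\le K\varepsilon$ for all $t\in\mathbb{T}$; the equation has Ulam stability if such $K$ exists. ''Minimum'' means no positive number smaller than $K_0$ is an Ulam stability constant. Note $E=|e_p(nh)|$ where $e_p(t)=\prod_{j=0}^{t/h-1}(1+hp(jh))$. *)

From Stdlib Require Import Reals Lra.
From Coquelicot Require Import Coquelicot.
Open Scope R_scope.

(* The time scale T = {0, h, 2h, ...} is parametrised by nat: the point t = m*h
   corresponds to m.  A function x : T -> C is thus a function nat -> C,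
   with x m standing for x(m h). *)

Fixpoint prodR (f : nat -> R) (m : nat) : R :=
  match m with O => 1 | S k => prodR f k * f k end.
Fixpoint sumR (f : nat -> R) (m : nat) : R :=
  match m with O => 0 | S k => sumR f k + f k end.
Fixpoint maxR (f : nat -> R) (m : nat) : R :=
  match m with O => f O | S k => Rmax (maxR f k) (f (S k)) end.

Definition delta_h (h : R) (x : nat -> C) (m : nat) : C :=
  Cdiv (Cminus (x (S m)) (x m)) (RtoC h).

Definition is_solution (h : R) (p : nat -> C) (x : nat -> C) : Prop :=
  forall m : nat, Cminus (delta_h h x m) (Cmult (p m) (x m)) = RtoC 0.

Definition ulam_constant (h : R) (p : nat -> C) (K : R) : Prop :=
  0 < K /\
  forall (eps : R), 0 < eps ->
  forall phi : nat -> C,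
    (forall m : nat, Cmod (Cminus (delta_h h phi m) (Cmult (p m) (phi m))) <= eps) ->
    exists x : nat -> C, is_solution h p x /\
      forall m : nat, Cmod (Cminus (phi m) (x m)) <= K * eps.

Definition ulam_stable (h : R) (p : nat -> C) : Prop :=
  exists K, ulam_constant h p K.

Definition min_ulam_constant (h : R) (p : nat -> C) (K0 : R) : Prop :=
  ulam_constant h p K0 /\
  forall K : R, 0 < K -> K < K0 -> ~ ulam_constant h p K.

Definition absfac (h : R) (pk : nat -> C) (i : nat) : R :=
  Cmod (Cplus (RtoC 1) (Cmult (RtoC h) (pk i))).

Definition E_const (h : R) (n : nat) (pk : nat -> C) : R :=
  prodR (absfac h pk) n.

Definition S_const (h : R) (n : nat) (pk : nat -> C) (k : nat) : R :=
  sumR (fun j => / prodR (fun i => absfac h pk ((k + i) mod n)) (S j)) n.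

Definition K0_const (h : R) (n : nat) (pk : nat -> C) : R :=
  h * E_const h n pk / Rabs (1 - E_const h n pk) * maxR (S_const h n pk) (n - 1).

(* Every solution is c e_p, and |e_p(mh)| = P_m := prod_{i<m} |1 + h p_i| ([growth m]) satisfies
   P_(m+n) = E P_m.  With sigma_m := sum_{j=1}^{n} 1/P_(m+j), the weight
   B_m := E P_m sigma_m / |1 - E| ([bound m]) is n-periodic, P_m sigma_m = S_(m mod n), and so
   h max_m B_m = K0.  If E < 1, the error u := phi - phi(0) e_p obeys
   |u_(m+1)| <= |1 + h p_m| |u_m| + h eps while B_(m+1) = |1 + h p_m| B_m + 1, whence
   |u_m| <= h eps B_m.  If E > 1, phi / e_p has increments at most h eps / P_(m+1),
   whose tail sums are h eps B_m / P_m, so it converges to some c with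
   |phi - c e_p| <= h eps B.  For minimality, phi := -h (B / P) e_p has residual of
   modulus 1 and |phi| = h B; a solution within K of it is bounded, hence zero since
   P_(qn) = E^q, so K >= h max B = K0. *)

From Stdlib Require Import Reals Lra Lia.
From Coquelicot Require Import Coquelicot.
Open Scope R_scope.

Lemma prodR_ext f g m : (forall i, (i < m)%nat -> f i = g i) -> prodR f m = prodR g m.
Proof.
  induction m as [|m IHm]; intros fg; simpl; [reflexivity|].
  rewrite (fg m), IHm; [reflexivity | intros; apply fg; lia | lia].
Qed.

Lemma sumR_ext f g m : (forall i, (i < m)%nat -> f i = g i) -> sumR f m = sumR g m.
Proof.
  induction m as [|m IHm]; intros fg; simpl; [reflexivity|].
  rewrite (fg m), IHm; [reflexivity | intros; apply fg; lia | lia].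
Qed.

Lemma prodR_add f a b : prodR f (a + b) = prodR f a * prodR (fun i => f (a + i)%nat) b.
Proof.
  induction b as [|b IHb]; simpl; [rewrite Nat.add_0_r; ring|].
  rewrite Nat.add_succ_r; simpl; rewrite IHb; ring.
Qed.

Lemma prodR_pos f m : (forall i, (i < m)%nat -> 0 < f i) -> 0 < prodR f m.
Proof.
  induction m as [|m IHm]; intros f_pos; simpl; [lra|].
  apply Rmult_lt_0_compat; [apply IHm; intros|]; apply f_pos; lia.
Qed.

Lemma prodR_neq0 f m i : prodR f m <> 0 -> (i < m)%nat -> f i <> 0.
Proof.
  induction m as [|m IHm]; simpl; intros prod_neq0 im; [lia|].
  destruct (Nat.eq_dec i m) as [->|im'].
  - intros fm0; apply prod_neq0; rewrite fm0; ring.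
  - apply IHm; [intros prod0; apply prod_neq0; rewrite prod0; ring | lia].
Qed.

Lemma sumR_scal c f m : sumR (fun i => c * f i) m = c * sumR f m.
Proof. induction m as [|m IHm]; simpl; [|rewrite IHm]; ring. Qed.

Lemma sumR_shift f m : sumR f (S m) = f O + sumR (fun i => f (S i)) m.
Proof. induction m as [|m IHm]; [simpl; ring|]. simpl in *; rewrite IHm; ring. Qed.

Lemma sumR_nonneg f m : (forall i, (i < m)%nat -> 0 <= f i) -> 0 <= sumR f m.
Proof.
  induction m as [|m IHm]; intros f_ge0; simpl; [lra|].
  assert (0 <= sumR f m) by (apply IHm; intros; apply f_ge0; lia).
  specialize (f_ge0 m ltac:(lia)); lra.
Qed.

Lemma sumR_pos f m : (0 < m)%nat -> (forall i, (i < m)%nat -> 0 < f i) -> 0 < sumR f m.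
Proof.
  destruct m as [|m]; intros m_pos f_pos; [lia|]; simpl.
  assert (0 <= sumR f m) by (apply sumR_nonneg; intros; left; apply f_pos; lia).
  specialize (f_pos m ltac:(lia)); lra.
Qed.

Lemma maxR_ge f m k : (k <= m)%nat -> f k <= maxR f m.
Proof.
  induction m as [|m IHm]; intros km; simpl.
  - replace k with O by lia; lra.
  - destruct (Nat.eq_dec k (S m)) as [->|km']; [apply Rmax_r|].
    eapply Rle_trans; [apply IHm; lia | apply Rmax_l].
Qed.

Lemma maxR_attained f m : exists k, (k <= m)%nat /\ maxR f m = f k.
Proof.
  induction m as [|m [k [km IHm]]]; [exists O; split; auto|]; simpl.
  destruct (Rle_dec (maxR f m) (f (S m))) as [le|nle].
  - exists (S m); split; [lia | apply Rmax_right; lra].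
  - exists k; split; [lia | rewrite Rmax_left; lra].
Qed.

Lemma recurrence_le (a u v : nat -> R) (c : R) :
  (forall m, 0 <= a m) ->
  (forall m, u (S m) <= a m * u m + c) ->
  (forall m, v (S m) = a m * v m + c) ->
  u O <= v O -> forall m, u m <= v m.
Proof.
  intros a_ge0 u_step v_step u0_le m; induction m as [|m IHm]; [exact u0_le|].
  rewrite v_step; eapply Rle_trans; [apply u_step|].
  apply Rplus_le_compat_r, Rmult_le_compat_l; auto.
Qed.

Lemma telescoping_limit (w : nat -> C) (g : nat -> R) :
  (forall m, Cmod (w (S m) - w m)%C <= g m - g (S m)) ->
  (forall m, 0 <= g m) ->
  (forall d, 0 < d -> exists M, g M < d) ->
  exists c, forall m, Cmod (w m - c)%C <= g m.
Proof.
  intros w_step g_ge0 g_small.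
  assert (telescope : forall m d, Cmod (w (m + d)%nat - w m)%C <= g m - g (m + d)%nat).
  { intros m d; induction d as [|d IHd].
    - rewrite Nat.add_0_r; replace (w m - w m)%C with (RtoC 0) by ring; rewrite Cmod_0; lra.
    - rewrite Nat.add_succ_r.
      replace (w (S (m + d)) - w m)%C
        with ((w (S (m + d)) - w (m + d)%nat) + (w (m + d)%nat - w m))%C by ring.
      eapply Rle_trans; [apply Cmod_triangle|]; specialize (w_step (m + d)%nat); lra. }
  assert (close : forall m k, (m <= k)%nat -> Cmod (w k - w m)%C <= g m - g k).
  { intros m k mk; replace k with (m + (k - m))%nat by lia; apply telescope. }
  assert (g_antitone : forall m k, (m <= k)%nat -> g k <= g m).
  { intros m k mk; specialize (close m k mk); pose proof (Cmod_ge_0 (w k - w m)%C); lra. }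
  destruct (proj1 (filterlim_locally_cauchy (F := eventually) (w : nat -> C_CompleteNormedModule)))
    as [c w_lim].
  { intros eps; destruct (g_small eps (cond_pos eps)) as [M gM].
    assert (cauchy : forall u v, (M <= u)%nat -> (u <= v)%nat -> ball (w u) eps (w v)).
    { intros u v Mu uv; apply (norm_compat1 (V := C_NormedModule)).
      change (Cmod (w v - w u)%C < eps).
      specialize (close u v uv); specialize (g_antitone M u Mu); specialize (g_ge0 v); lra. }
    exists (fun k => (M <= k)%nat); split; [exists M; auto|].
    intros u v Mu Mv; destruct (Nat.le_ge_cases u v) as [uv|vu];
      [|apply ball_sym]; apply cauchy; assumption. }
  exists c; intros m; apply Rle_plus_epsilon; intros eps eps_pos.
  destruct (proj1 (filterlim_locally_ball_norm w c) w_lim (mkposreal eps eps_pos)) as [N w_near_c].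
  specialize (w_near_c (m + N)%nat ltac:(lia)); change (Cmod (w (m + N)%nat - c)%C < eps) in w_near_c.
  replace (w m - c)%C with ((w (m + N)%nat - c) - (w (m + N)%nat - w m))%C by ring.
  eapply Rle_trans; [apply Cmod_triangle|]; rewrite Cmod_opp.
  specialize (close m (m + N)%nat ltac:(lia)); specialize (g_ge0 (m + N)%nat); lra.
Qed.

Lemma RtoC_neq0 (x : R) : x <> 0 -> RtoC x <> RtoC 0.
Proof. intros x_neq0 x0; injection x0; exact x_neq0. Qed.

Section DiscreteExponential.

Variables (h : R) (p : nat -> C).
Hypothesis h_neq0 : h <> 0.

Fixpoint dexp (m : nat) : C :=
  match m with O => RtoC 1 | S k => (dexp k * (1 + h * p k))%C end.

Definition residual (x : nat -> C) (m : nat) : C := (delta_h h x m - p m * x m)%C.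

Lemma residual_recurrence x m : x (S m) = ((1 + h * p m) * x m + h * residual x m)%C.
Proof. unfold residual, delta_h; field; apply RtoC_neq0, h_neq0. Qed.

Lemma is_solution_scal_dexp c : is_solution h p (fun m => c * dexp m)%C.
Proof. intros m; unfold delta_h; simpl; field; apply RtoC_neq0, h_neq0. Qed.

Lemma solution_eq_scal_dexp x : is_solution h p x -> forall m, x m = (x O * dexp m)%C.
Proof.
  intros x_sol m; induction m as [|m IHm]; simpl; [ring|].
  rewrite residual_recurrence, IHm; unfold residual; rewrite x_sol; ring.
Qed.

End DiscreteExponential.

Section PeriodicGrowth.

Variables (h : R) (n : nat) (pk : nat -> C).
Hypothesis h_pos : 0 < h.
Hypothesis n_pos : (0 < n)%nat.
Hypothesis E_pos : 0 < E_const h n pk.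

Local Notation E := (E_const h n pk).

Definition step_factor (m : nat) : R := absfac h pk (m mod n).

Definition growth (m : nat) : R := prodR step_factor m.

Definition sigma (m : nat) : R := sumR (fun j => / growth (m + S j)) n.

Definition bound (m : nat) : R := E * (growth m * sigma m) / Rabs (1 - E).

Lemma step_factor_pos m : 0 < step_factor m.
Proof.
  assert (mn : (m mod n < n)%nat) by (apply Nat.mod_upper_bound; lia).
  pose proof (prodR_neq0 _ _ _ (Rgt_not_eq _ _ E_pos) mn).
  pose proof (Cmod_ge_0 (1 + h * pk (m mod n))%C).
  unfold step_factor, absfac in *; lra.
Qed.

Lemma growth_pos m : 0 < growth m.
Proof. apply prodR_pos; intros; apply step_factor_pos. Qed.

Lemma growth_period : growth n = E.
Proof. apply prodR_ext; intros i i_n; unfold step_factor; rewrite Nat.mod_small; auto. Qed.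

Lemma growth_add_period m : growth (m + n) = growth m * E.
Proof.
  unfold growth; rewrite Nat.add_comm, prodR_add; fold (growth n); rewrite growth_period.
  rewrite (prodR_ext _ step_factor); [ring|].
  intros i _; unfold step_factor.
  replace (n + i)%nat with (i + 1 * n)%nat by lia; rewrite Nat.Div0.mod_add; reflexivity.
Qed.

Lemma growth_mul_period q : growth (q * n) = E ^ q.
Proof.
  induction q as [|q IHq]; [reflexivity|].
  replace (S q * n)%nat with (q * n + n)%nat by lia.
  rewrite growth_add_period, IHq; simpl; ring.
Qed.

Lemma S_const_mod m : S_const h n pk (m mod n) = growth m * sigma m.
Proof.
  unfold S_const, sigma; rewrite <- sumR_scal; apply sumR_ext; intros j _.
  assert (window : growth (m + S j) = growth m * prodR (fun i => step_factor (m + i)) (S j))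
    by apply prodR_add.
  rewrite window, (prodR_ext _ (fun i => step_factor (m + i))).
  - pose proof (growth_pos m); pose proof (growth_pos (m + S j)). field; nra.
  - intros i _; unfold step_factor; rewrite Nat.Div0.add_mod_idemp_l; reflexivity.
Qed.

Lemma sigma_pos m : 0 < sigma m.
Proof. apply sumR_pos; auto; intros; apply Rinv_0_lt_compat, growth_pos. Qed.

Lemma sigma_step m : sigma m = sigma (S m) + / growth (S m) - / (growth (S m) * E).
Proof.
  pose proof (sumR_shift (fun j => / growth (m + S j)) n) as shift; simpl in shift.
  replace (m + S n)%nat with (S m + n)%nat in shift by lia.
  rewrite growth_add_period, Nat.add_1_r in shift.
  rewrite (sumR_ext (fun i => / growth (m + S (S i))) (fun j => / growth (S m + S j))) in shift
    by (intros i _; now replace (S m + S i)%nat with (m + S (S i))%nat by lia).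
  unfold sigma; lra.
Qed.

Lemma bound_pos m : E <> 1 -> 0 < bound m.
Proof.
  intros E_neq1; pose proof (Rabs_pos_lt (1 - E) ltac:(lra)).
  pose proof (growth_pos m); pose proof (sigma_pos m).
  unfold bound; apply Rdiv_lt_0_compat; [apply Rmult_lt_0_compat; [|apply Rmult_lt_0_compat]|]; auto.
Qed.

Lemma K0_const_attained : exists k, K0_const h n pk = h * bound k.
Proof.
  destruct (maxR_attained (S_const h n pk) (n - 1)) as [k [k_le max_k]].
  exists k; unfold K0_const, bound; rewrite max_k.
  rewrite <- (Nat.mod_small k n) at 1 by lia; rewrite S_const_mod; unfold Rdiv; ring.
Qed.

Lemma K0_const_ge_bound m : E <> 1 -> h * bound m <= K0_const h n pk.
Proof.
  intros E_neq1; pose proof (Rabs_pos_lt (1 - E) ltac:(lra)).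
  assert (m_mod : (m mod n <= n - 1)%nat)
    by (enough (m mod n < n)%nat by lia; apply Nat.mod_upper_bound; lia).
  pose proof (maxR_ge (S_const h n pk) _ _ m_mod) as S_le_max.
  rewrite S_const_mod in S_le_max.
  unfold K0_const, bound; unfold Rdiv.
  replace (h * (E * (growth m * sigma m) * / Rabs (1 - E)))
    with (h * E * / Rabs (1 - E) * (growth m * sigma m)) by ring.
  apply Rmult_le_compat_l; [|exact S_le_max].
  left; apply Rmult_lt_0_compat; [apply Rmult_lt_0_compat|apply Rinv_0_lt_compat]; auto.
Qed.

Lemma bound_succ_E_lt1 m : E < 1 -> bound (S m) = step_factor m * bound m + 1.
Proof.
  intros E_lt1; unfold bound; rewrite Rabs_right by lra.
  rewrite (sigma_step m).
  change (growth (S m)) with (growth m * step_factor m).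
  pose proof (growth_pos m); pose proof (step_factor_pos m).
  field; repeat split; lra.
Qed.

(* For E > 1 this is sum_{j>m} 1/growth j, by [tail_step] and [tail_vanishes]. *)
Definition tail (m : nat) : R := E * sigma m / (E - 1).

Lemma bound_eq_tail m : 1 < E -> bound m = growth m * tail m.
Proof. intros E_gt1; unfold bound, tail; rewrite Rabs_left by lra; field; lra. Qed.

Lemma tail_step m : 1 < E -> tail m = tail (S m) + / growth (S m).
Proof.
  intros E_gt1; unfold tail; rewrite (sigma_step m).
  pose proof (growth_pos (S m)); field; lra.
Qed.

Lemma tail_pos m : 1 < E -> 0 < tail m.
Proof. intros E_gt1; pose proof (sigma_pos m); unfold tail; apply Rdiv_lt_0_compat; nra. Qed.

Lemma sigma_add_period m : sigma (m + n) * E = sigma m.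
Proof.
  unfold sigma; rewrite Rmult_comm, <- sumR_scal; apply sumR_ext; intros j _.
  replace (m + n + S j)%nat with (m + S j + n)%nat by lia.
  rewrite growth_add_period; pose proof (growth_pos (m + S j)); field; lra.
Qed.

Lemma tail_vanishes d : 1 < E -> 0 < d -> exists M, tail M < d.
Proof.
  intros E_gt1 d_pos.
  assert (tail_mul_period : forall q, tail (q * n) * E ^ q = tail O).
  { induction q as [|q IHq]; [simpl; ring|].
    replace (S q * n)%nat with (q * n + n)%nat by lia.
    rewrite <- IHq; unfold tail; rewrite <- (sigma_add_period (q * n)); simpl; field; lra. }
  destruct (Pow_x_infinity E ltac:(rewrite Rabs_right; lra) (tail O / d + 1)) as [q Eq_large].
  specialize (Eq_large q (le_n q)); rewrite Rabs_right in Eq_large by (left; apply pow_lt; lra).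
  assert (tail O + d <= d * E ^ q).
  { replace (tail O + d) with (d * (tail O / d + 1)) by (field; lra).
    apply Rmult_le_compat_l; lra. }
  exists (q * n)%nat; apply (Rmult_lt_reg_r (E ^ q)); [apply pow_lt; lra|].
  rewrite tail_mul_period; lra.
Qed.

Section PeriodicEquation.

Variable p : nat -> C.
Hypothesis p_periodic : forall m, p m = pk (m mod n).

Let h_neq0 : h <> 0 := Rgt_not_eq h 0 h_pos.

Local Notation dexp := (dexp h p).
Local Notation residual := (residual h p).

Lemma Cmod_dexp m : Cmod (dexp m) = growth m.
Proof.
  induction m as [|m IHm]; [apply Cmod_1|]; simpl.
  rewrite Cmod_mult, IHm, p_periodic; reflexivity.
Qed.

Lemma dexp_neq0 m : dexp m <> RtoC 0.
Proof. apply Cmod_gt_0; rewrite Cmod_dexp; apply growth_pos. Qed.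

Lemma stability_E_lt1 phi eps : E < 1 -> (forall m, Cmod (residual phi m) <= eps) ->
  forall m, Cmod (phi m - phi O * dexp m)%C <= h * eps * bound m.
Proof.
  intros E_lt1 phi_res.
  assert (eps_ge0 : 0 <= eps) by (eapply Rle_trans; [apply Cmod_ge_0 | apply (phi_res O)]).
  apply (recurrence_le step_factor _ _ (h * eps)).
  - intros m; left; apply step_factor_pos.
  - intros m; rewrite (residual_recurrence h p h_neq0 phi m); simpl.
    replace ((1 + h * p m) * phi m + h * residual phi m - phi O * (dexp m * (1 + h * p m)))%C
      with ((1 + h * p m) * (phi m - phi O * dexp m) + h * residual phi m)%C by ring.
    eapply Rle_trans; [apply Cmod_triangle|].
    rewrite !Cmod_mult, Cmod_R, Rabs_right, p_periodic by lra.
    specialize (phi_res m); apply Rplus_le_compat_l, Rmult_le_compat_l; lra.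
  - intros m; rewrite bound_succ_E_lt1 by auto; ring.
  - simpl; replace (phi O - phi O * 1)%C with (RtoC 0) by ring; rewrite Cmod_0.
    pose proof (bound_pos O ltac:(lra)).
    apply Rmult_le_pos; [apply Rmult_le_pos|]; lra.
Qed.

Lemma Cmod_quotient_increment phi m :
  Cmod (phi (S m) / dexp (S m) - phi m / dexp m)%C = h * Cmod (residual phi m) / growth (S m).
Proof.
  assert (one_plus_neq0 : (1 + h * p m)%C <> RtoC 0).
  { intros z; apply (dexp_neq0 (S m)); simpl; rewrite z; ring. }
  replace (phi (S m) / dexp (S m) - phi m / dexp m)%C with (h * residual phi m / dexp (S m))%C
    by (rewrite (residual_recurrence h p h_neq0 phi m); simpl;
        field; split; [apply dexp_neq0 | exact one_plus_neq0]).
  rewrite Cmod_div, Cmod_mult, Cmod_R, Rabs_right, Cmod_dexp by (apply dexp_neq0 || lra).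
  reflexivity.
Qed.

Lemma stability_E_gt1 phi eps : 1 < E -> (forall m, Cmod (residual phi m) <= eps) ->
  exists c, forall m, Cmod (phi m - c * dexp m)%C <= h * eps * bound m.
Proof.
  intros E_gt1 phi_res.
  assert (eps_ge0 : 0 <= eps) by (eapply Rle_trans; [apply Cmod_ge_0 | apply (phi_res O)]).
  destruct (telescoping_limit (fun m => phi m / dexp m)%C (fun m => h * eps * tail m))
    as [c c_close].
  - intros m; rewrite Cmod_quotient_increment, (tail_step m E_gt1).
    pose proof (growth_pos (S m)); specialize (phi_res m).
    replace (h * eps * (tail (S m) + / growth (S m)) - h * eps * tail (S m))
      with (h * eps / growth (S m)) by (field; lra).
    apply Rmult_le_compat_r; [left; apply Rinv_0_lt_compat; lra|].
    apply Rmult_le_compat_l; lra.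
  - intros m; pose proof (tail_pos m E_gt1).
    apply Rmult_le_pos; [apply Rmult_le_pos|]; lra.
  - intros d d_pos.
    destruct (tail_vanishes (d / (h * eps + 1)) E_gt1) as [M tail_M].
    { apply Rdiv_lt_0_compat; nra. }
    exists M; pose proof (tail_pos M E_gt1).
    apply (Rmult_lt_compat_l (h * eps + 1)) in tail_M; [|nra].
    replace ((h * eps + 1) * (d / (h * eps + 1))) with d in tail_M by (field; nra). nra.
  - exists c; intros m.
    replace (phi m - c * dexp m)%C with ((phi m / dexp m - c) * dexp m)%C
      by (field; apply dexp_neq0).
    rewrite Cmod_mult, Cmod_dexp, (bound_eq_tail m E_gt1).
    pose proof (growth_pos m); specialize (c_close m).
    apply (Rmult_le_compat_r (growth m)) in c_close; lra.
Qed.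

Lemma K0_const_pos : E <> 1 -> 0 < K0_const h n pk.
Proof.
  intros E_neq1; destruct K0_const_attained as [k ->].
  apply Rmult_lt_0_compat; [exact h_pos | apply bound_pos, E_neq1].
Qed.

Lemma ulam_constant_K0 : E <> 1 -> ulam_constant h p (K0_const h n pk).
Proof.
  intros E_neq1; split; [apply K0_const_pos, E_neq1|].
  intros eps eps_pos phi phi_res.
  assert (close_enough : forall c, (forall m, Cmod (phi m - c * dexp m)%C <= h * eps * bound m) ->
            exists x, is_solution h p x /\ forall m, Cmod (phi m - x m)%C <= K0_const h n pk * eps).
  { intros c c_close; exists (fun m => c * dexp m)%C; split; [apply is_solution_scal_dexp, h_neq0|].
    intros m; eapply Rle_trans; [apply c_close|].
    pose proof (K0_const_ge_bound m E_neq1); nra. }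
  destruct (Rlt_or_le E 1) as [E_lt1 | E_ge1].
  - apply (close_enough (phi O)), stability_E_lt1; auto.
  - destruct (stability_E_gt1 phi eps ltac:(lra) phi_res) as [c c_close]; exact (close_enough c c_close).
Qed.

Definition extremal (m : nat) : C := (RtoC (- (h * tail m)) * dexp m)%C.

Lemma Cmod_residual_extremal m : 1 < E -> Cmod (residual extremal m) = 1.
Proof.
  intros E_gt1.
  replace (residual extremal m) with (dexp (S m) * RtoC (tail m - tail (S m)))%C.
  2:{ unfold residual, delta_h, extremal; simpl.
      rewrite !RtoC_opp, !RtoC_mult, !RtoC_minus; field; apply RtoC_neq0, h_neq0. }
  rewrite Cmod_mult, Cmod_R, Cmod_dexp, (tail_step m E_gt1).
  pose proof (growth_pos (S m)).
  replace (tail (S m) + / growth (S m) - tail (S m)) with (/ growth (S m)) by ring.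
  rewrite Rabs_right by (left; apply Rinv_0_lt_compat; lra); field; lra.
Qed.

Lemma Cmod_extremal m : 1 < E -> Cmod (extremal m) = h * bound m.
Proof.
  intros E_gt1; unfold extremal.
  rewrite Cmod_mult, Cmod_R, Cmod_dexp, (bound_eq_tail m E_gt1), Rabs_left1.
  - ring.
  - pose proof (tail_pos m E_gt1); nra.
Qed.

Lemma bounded_solution_zero x M : 1 < E -> is_solution h p x ->
  (forall m, Cmod (x m) <= M) -> x O = RtoC 0.
Proof.
  intros E_gt1 x_sol x_bounded.
  destruct (Req_dec (Cmod (x O)) 0) as [x0_zero | x0_nonzero]; [apply Cmod_eq_0, x0_zero|].
  pose proof (Cmod_ge_0 (x O)).
  destruct (Pow_x_infinity E ltac:(rewrite Rabs_right; lra) (M / Cmod (x O) + 1)) as [q Eq_large].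
  specialize (Eq_large q (le_n q)); rewrite Rabs_right in Eq_large by (left; apply pow_lt; lra).
  specialize (x_bounded (q * n)%nat).
  rewrite (solution_eq_scal_dexp h p h_neq0 x x_sol), Cmod_mult, Cmod_dexp,
    growth_mul_period in x_bounded.
  assert (M + Cmod (x O) <= Cmod (x O) * E ^ q).
  { replace (M + Cmod (x O)) with (Cmod (x O) * (M / Cmod (x O) + 1)) by (field; lra).
    apply Rmult_le_compat_l; lra. }
  lra.
Qed.

Lemma K0_minimal K : 1 < E -> K < K0_const h n pk -> ~ ulam_constant h p K.
Proof.
  intros E_gt1 K_lt [_ ulam_K].
  destruct (ulam_K 1 Rlt_0_1 extremal) as [x [x_sol x_close]].
  { intros m; right; apply Cmod_residual_extremal, E_gt1. }
  assert (x_zero : x O = RtoC 0).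
  { apply (bounded_solution_zero x (K0_const h n pk + K)); auto.
    intros m; replace (x m) with (extremal m - (extremal m - x m))%C by ring.
    eapply Rle_trans; [apply Cmod_triangle|]; rewrite Cmod_opp, Cmod_extremal by exact E_gt1.
    pose proof (K0_const_ge_bound m ltac:(lra)); specialize (x_close m); lra. }
  destruct K0_const_attained as [k K0_eq].
  specialize (x_close k); rewrite (solution_eq_scal_dexp h p h_neq0 x x_sol k), x_zero in x_close.
  replace (extremal k - 0 * dexp k)%C with (extremal k) in x_close by ring.
  rewrite Cmod_extremal in x_close by exact E_gt1; lra.
Qed.

End PeriodicEquation.

End PeriodicGrowth.

Theorem theorem4p4 (h : R) (n : nat) (pk : nat -> C) (p : nat -> C) :
  0 < h ->
  (0 < n)%nat ->
  (forall i : nat, (i < n)%nat -> pk i <> RtoC (- / h)) ->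
  (* p(t) = p_k when t/h = k (mod n) *)
  (forall m : nat, p m = pk (m mod n)) ->
  (* p has no period smaller than n *)
  (forall q : nat, (0 < q)%nat -> (q < n)%nat -> exists m : nat, p (m + q)%nat <> p m) ->
  0 < E_const h n pk ->
  E_const h n pk <> 1 ->
  ulam_stable h p /\ ulam_constant h p (K0_const h n pk) /\
  (1 < E_const h n pk -> min_ulam_constant h p (K0_const h n pk)).
Proof.
  intros h_pos n_pos _ p_periodic _ E_pos E_neq1.
  assert (K0_ulam := ulam_constant_K0 h n pk h_pos n_pos E_pos p p_periodic E_neq1).
  split; [exists (K0_const h n pk); exact K0_ulam|].
  split; [exact K0_ulam|].
  intros E_gt1; split; [exact K0_ulam|].
  intros K _; apply (K0_minimal h n pk h_pos n_pos E_pos p p_periodic K E_gt1).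
Qed.
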